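(* Let $T>0$, $N\ge2$, $h=T/N$, $t_n=nh$, and let $\beta,\gamma\in\mathbb R$ satisfy either (C1) $\beta<0$, $\gamma<0$ and $-1<\beta+\gamma<0$, or (C2) $\beta\ge0$ and $\gamma\in(-1,0)$. Then there is a constant $C$ (independent of $N$) such that for all $1<j\le N$, $\tau\in(t_{j-1},t_j]$ and $\eta\in(0,t_{j-1}]$, $$\int_0^\eta(\eta-r)^\beta\big((t_{j-1}-r)^\gamma-(\tau-r)^\gamma\big)\,\mathrm dr\le Ch^{(\beta+\gamma+1)\wedge(\gamma+1)}.$$
   Context: $a\wedge b=\min\{a,b\}$. *)

From HB Require Import structures.
From mathcomp Require Import all_boot all_order all_algebra.
From mathcomp Require Import all_classical all_reals all_analysis.
Set Implicit Arguments. Unset Strict Implicit. Unset Printing Implicit Defensive.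
Import Order.TTheory GRing.Theory Num.Theory.

Local Open Scope ring_scope.

Definition grid_t (R : realType) (T : R) (N n : nat) : R := n%:R * (T / N%:R).

From HB Require Import structures.
From mathcomp Require Import all_boot all_order all_algebra.
From mathcomp Require Import all_classical all_reals all_analysis.
From mathcomp Require Import measurable_realfun ring lra.
Import Order.TTheory GRing.Theory Num.Theory.
Local Open Scope classical_set_scope.
Local Open Scope ring_scope.

(* Put a := t_{j-1} and d := tau - a, so that 0 < d <= h, and write the bracket
   as g (a - r) with g x := x^gamma - (x + d)^gamma, nonincreasing on x > 0.
   Under (C1), as eta - r <= a - r, the weight is absorbed:
     (eta - r)^beta g (a - r) <= (eta - r)^beta g (eta - r)
                              <= (eta - r)^(beta+gamma) - (eta - r + d)^(beta+gamma);
   under (C2) the weight is at most T^beta.  Either way one is left with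
   int_0^eta ((c - r)^p - (c + d - r)^p) dr for some -1 < p <= 0 and c >= eta,
   which the fundamental theorem of calculus and the subadditivity of
   x |-> x^(p+1) bound by d^(p+1)/(p+1) <= h^(p+1)/(p+1). *)

Section powR_gap.
Context {R : realType}.
Implicit Types p q d x y : R.

Lemma le0_ger_powR p x y : p <= 0 -> 0 < x -> x <= y -> y `^ p <= x `^ p.
Proof.
move=> p0 x0 xy; have y0 : 0 < y := lt_le_trans x0 xy.
by rewrite /powR !gt_eqF // ler_expR ler_wnM2l // ler_ln.
Qed.

(* The paper's (t_{j-1} - r)^gamma - (tau - r)^gamma is
   [powR_gap gamma (tau - t_{j-1}) (t_{j-1} - r)]. *)
Definition powR_gap p d x := x `^ p - (x + d) `^ p.

Lemma powR_gap_ge0 p d x : p <= 0 -> 0 <= d -> 0 < x -> 0 <= powR_gap p d x.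
Proof. by move=> p0 d0 x0; rewrite subr_ge0 le0_ger_powR // lerDl. Qed.

Lemma powR_gap_nonincr p d x y : p <= 0 -> 0 <= d -> 0 < x -> x <= y ->
  powR_gap p d y <= powR_gap p d x.
Proof.
move=> p0 d0 x0 xy; have y0 : 0 < y := lt_le_trans x0 xy.
(* a product of two nonnegative factors, both nonincreasing in z *)
have gapE z : 0 < z -> powR_gap p d z = z `^ p * (1 - (1 + d / z) `^ p).
  rewrite /powR_gap => z0; have -> : z + d = z * (1 + d / z).
    by rewrite mulrDr mulr1 mulrCA divff ?gt_eqF // mulr1.
  by rewrite powRM ?addr_ge0 ?divr_ge0 ?(ltW z0) // mulrBr mulr1.
rewrite !gapE //; apply: ler_pM; rewrite ?powR_ge0 ?le0_ger_powR //.
- rewrite subr_ge0; apply: le_trans (le0_ger_powR p 1 _ p0 ltr01 _) _; last by rewrite powR1.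
  by rewrite lerDl divr_ge0 // ltW.
- rewrite lerD2l lerN2 le0_ger_powR ?lerD2l ?ler_wpM2l ?lef_pV2 //.
  by rewrite ltr_wpDr ?divr_ge0 ?(ltW y0).
Qed.

Lemma powR_gap_mulr_le p q d x y : p <= 0 -> q <= 0 -> 0 <= d -> 0 < x -> x <= y ->
  x `^ p * powR_gap q d y <= powR_gap (p + q) d x.
Proof.
move=> p0 q0 d0 x0 xy; have xd0 : 0 < x + d by rewrite ltr_pwDl.
apply: le_trans (ler_wpM2l (powR_ge0 _ _) (powR_gap_nonincr q d x y q0 d0 x0 xy)) _.
rewrite /powR_gap mulrBr -powRD ?(gt_eqF x0) ?implybT // lerD2l lerN2.
by rewrite powRD ?(gt_eqF xd0) ?implybT // ler_wpM2r ?powR_ge0 // le0_ger_powR // lerDl.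
Qed.

Lemma le1_powR_subadditive {q x d} : 0 < q <= 1 -> 0 <= x -> 0 <= d ->
  (x + d) `^ q <= x `^ q + d `^ q.
Proof.
move=> /andP[q0 q1] x0 d0.
have [s0|s0] := eqVneq (x + d) 0.
  by rewrite s0 powR0 ?gt_eqF // addr_ge0 // powR_ge0.
have sp : 0 < x + d by rewrite lt_neqAle eq_sym s0 addr_ge0.
(* normalise to [u + v = 1], where [u <= u^q] *)
have scale z : 0 <= z -> z `^ q = (x + d) `^ q * (z / (x + d)) `^ q.
  by move=> z0; rewrite -powRM ?divr_ge0 ?(ltW sp) // mulrCA divff ?mulr1.
have le_pow z : 0 <= z -> z <= x + d -> z / (x + d) <= (z / (x + d)) `^ q.
  move=> z0 zs; have [->|zn0] := eqVneq z 0; first by rewrite mul0r powR0 ?gt_eqF.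
  apply: ger1_powR => //; rewrite ler_pdivrMr // mul1r zs andbT.
  by rewrite divr_gt0 // lt_neqAle eq_sym zn0.
rewrite (scale x) // (scale d) // -mulrDr -{1}(mulr1 ((x + d) `^ q)).
rewrite ler_wpM2l ?powR_ge0 // (le_trans _ (lerD (le_pow x _ _) (le_pow d _ _))) //.
- by rewrite -mulrDl divff.
- by rewrite lerDl.
- by rewrite lerDr.
Qed.

End powR_gap.

Section powR_gap_integral.
Context {R : realType}.
Local Notation mu := (@lebesgue_measure R).

Lemma derivable_oo_LRcontinuous_cc (f : R -> R) a b : a <= b ->
  {in `[a, b], forall x, derivable f x 1} -> derivable_oo_LRcontinuous f a b.
Proof.
move=> ab df; split.
- by move=> x; rewrite in_itv /= => /andP[ax xb]; apply: df; rewrite in_itv /= !ltW.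
- apply/cvg_at_right_filter/differentiable_continuous; rewrite -derivable1_diffP.
  by apply: df; rewrite in_itv /= lexx ab.
- apply/cvg_at_left_filter/differentiable_continuous; rewrite -derivable1_diffP.
  by apply: df; rewrite in_itv /= lexx ab.
Qed.

Lemma is_derive_powR_subr (q : R) {e r : R} : r < e ->
  is_derive r 1 (fun s => (e - s) `^ q) (- (q * (e - r) `^ (q - 1))).
Proof.
move=> re; have dsub : is_derive r (1 : R) (fun s => e - s) (-1).
  by apply: is_derive_eq; rewrite add0r mul1r.
have dpow : is_derive (e - r) 1 (@powR R ^~ q) (q * (e - r) `^ (q - 1)).
  by apply: is_derive1_powR; rewrite subr_gt0.
have := is_derive1_comp (g := fun s => e - s) (x := r) dpow dsub.
by move/is_derive_eq; apply; rewrite mulrN1.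
Qed.

Lemma is_derive_powR_gap_subr (q : R) {c d r : R} : r < c -> 0 <= d ->
  is_derive r 1 (fun s => powR_gap q d (c - s)) (- (q * powR_gap (q - 1) d (c - r))).
Proof.
move=> rc d0; have rcd : r < c + d by rewrite ltr_wpDr.
have -> : (fun s => powR_gap q d (c - s)) = (fun s => (c - s) `^ q - (c + d - s) `^ q).
  by apply/funext => s; rewrite /powR_gap addrAC.
have := is_deriveB (is_derive_powR_subr q rc) (is_derive_powR_subr q rcd).
move/is_derive_eq; apply; rewrite /powR_gap [c - r + d]addrAC; ring.
Qed.

Lemma integral_powR_gap_subr (a b c d p : R) : a < b -> b < c -> 0 <= d ->
  p + 1 != 0 ->
  (\int[mu]_(r in `[a, b]) (powR_gap p d (c - r))%:E =
   ((powR_gap (p + 1) d (c - a) - powR_gap (p + 1) d (c - b)) / (p + 1))%:E)%E.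
Proof.
move=> ab bc d0 q0; have lec x : x \in `[a, b] -> x < c.
  by rewrite in_itv /= => /andP[_ xb]; apply: le_lt_trans bc.
pose F s := - (p + 1)^-1 * powR_gap (p + 1) d (c - s).
have dF x : x < c -> is_derive x 1 F (powR_gap p d (c - x)).
  move=> xc; have := is_deriveZ (- (p + 1)^-1) (is_derive_powR_gap_subr (p + 1) xc d0).
  move/is_derive_eq; apply; rewrite addrK /GRing.scale /=.
  by rewrite mulrN mulNr opprK mulrA mulVf ?mul1r.
rewrite (@continuous_FTC2 _ _ F _ _ ab).
- by rewrite /F -EFinB; congr (_%:E); ring.
- have df : {in `[a, b], forall x, derivable (fun s => powR_gap p d (c - s)) x 1}.
    by move=> x /lec xc; case: (is_derive_powR_gap_subr p xc d0).
  exact: derivable_within_continuous df.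
- by apply: derivable_oo_LRcontinuous_cc (ltW ab) _ => x /lec /dF [].
- move=> x; rewrite in_itv /= => /andP[_ xb].
  by rewrite derive1E; case: (dF x (lt_trans xb bc)).
Qed.

Lemma integral_powR_gap_subr_cc_le (a b c d p : R) : a < b -> b < c -> 0 <= d ->
  -1 < p <= 0 ->
  (\int[mu]_(r in `[a, b]) (powR_gap p d (c - r))%:E <= (d `^ (p + 1) / (p + 1))%:E)%E.
Proof.
move=> ab bc d0 /andP[p1 p0]; have q01 : 0 < p + 1 <= 1 by apply/andP; split; lra.
have /andP[q0 _] := q01.
rewrite integral_powR_gap_subr ?gt_eqF // lee_fin ler_pM2r ?invr_gt0 //.
have ca : 0 <= c - a by rewrite subr_ge0 ltW // (lt_trans ab).
have cb : 0 <= c - b by rewrite subr_ge0 ltW.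
have gap_le0 : powR_gap (p + 1) d (c - a) <= 0.
  rewrite subr_le0; apply: ge0_ler_powR; rewrite ?nnegrE ?lerDl ?(ltW q0) //.
  exact: addr_ge0.
have := le1_powR_subadditive q01 cb d0.
by move: gap_le0; rewrite /powR_gap; lra.
Qed.

Lemma ge0_integral_itv_co_le (f : R -> R) (a s : R) (M : \bar R) : a < s ->
  measurable_fun `[a, s[ f -> {in `[a, s[, forall x, 0 <= f x} ->
  (forall b, a < b < s -> (\int[mu]_(x in `[a, b]) (f x)%:E <= M)%E) ->
  (\int[mu]_(x in `[a, s[) (f x)%:E <= M)%E.
Proof.
move=> lt_as mf f0 fM; rewrite itv_bnd_open_bigcup.
pose S n := `[a, s - n.+1%:R^-1]%classic.
have Sas n : S n `<=` `[a, s[.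
  by apply: subset_itvl; rewrite bnd_simp gtrBl invr_gt0.
have ndS : nondecreasing_seq S.
  apply/nondecreasing_seqP => n; rewrite subsetEset; apply: subset_itvl.
  by rewrite bnd_simp lerD2l lerN2 lef_pV2 ?posrE // ler_nat.
have mEf : measurable_fun `[a, s[ (fun x => (f x)%:E) by exact/measurable_EFinP.
have f0S n x : S n x -> (0 <= (f x)%:E)%E by move=> /Sas xas; rewrite lee_fin f0 ?inE.
have cvS := ge0_nondecreasing_set_cvg_integral (mu := mu) ndS (fun=> measurable_itv _)
  (fun n => measurable_funS (measurable_itv _) (Sas n) mEf) f0S.
rewrite -(cvg_lim _ cvS) //; apply: lime_le; first exact: cvgP cvS.
have sa : 0 < s - a by rewrite subr_gt0.
near=> n; apply: fM; rewrite gtrBl invr_gt0 ltr0n andbT ltrBrDl -ltrBrDr.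
by near: n; exact: (near_infty_natSinv_lt (PosNum sa)).
Unshelve. all: by end_near.
Qed.

Lemma measurable_powR_subr (A : set R) (c p : R) :
  measurable_fun A (fun r => (c - r) `^ p).
Proof.
apply: measurableT_comp (measurable_powR _) _.
exact: measurable_funB (measurable_cst c) (@measurable_id _ _ A).
Qed.

Lemma measurable_powR_gap_subr (A : set R) (c d p : R) :
  measurable_fun A (fun r => powR_gap p d (c - r)).
Proof.
apply: measurable_funB; first exact: measurable_powR_subr.
apply: measurableT_comp (measurable_powR _) _.
apply: measurable_funD (measurable_cst d).
exact: measurable_funB (measurable_cst c) (@measurable_id _ _ A).
Qed.

(* The integrand may blow up at r = s = c, so the fundamental theorem of calculus
   is only applied on the segments [a, b] with b < s. *)
Lemma integral_powR_gap_subr_oo_le (a s c d p : R) : a < s -> s <= c -> 0 <= d ->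
  -1 < p <= 0 ->
  (\int[mu]_(r in `]a, s[) (powR_gap p d (c - r))%:E <= (d `^ (p + 1) / (p + 1))%:E)%E.
Proof.
move=> lt_as sc d0 p01; have /andP[_ p0] := p01.
rewrite integral_itv_obnd_cbnd; last first.
  by apply/measurable_EFinP; exact: measurable_powR_gap_subr.
apply: ge0_integral_itv_co_le => //; first exact: measurable_powR_gap_subr.
- move=> r; rewrite in_itv /= => /andP[_ rs]; apply: powR_gap_ge0 => //.
  by rewrite subr_gt0 (lt_le_trans rs).
- move=> b /andP[ab bs]; apply: integral_powR_gap_subr_cc_le => //.
  exact: lt_le_trans sc.
Qed.

Lemma integral_le_powR_gap (f : R -> R) (K a s c d p : R) : a < s -> s <= c ->
  0 <= d -> -1 < p <= 0 -> 0 <= K -> measurable_fun `]a, s[ f ->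
  (forall r, a < r < s -> 0 <= f r <= K * powR_gap p d (c - r)) ->
  (\int[mu]_(r in `[a, s]) (f r)%:E <= (K * (d `^ (p + 1) / (p + 1)))%:E)%E.
Proof.
move=> lt_as sc d0 p01 K0 mf fK; have /andP[_ p0] := p01.
rewrite integral_itv_bndoo; last exact/measurable_EFinP.
apply: (@le_trans _ _ (\int[mu]_(r in `]a, s[) (K%:E * (powR_gap p d (c - r))%:E))%E).
  apply: ge0_le_integral => //.
  - by move=> r; rewrite /= in_itv /= => /fK /andP[f0 _]; rewrite lee_fin.
  - exact/measurable_EFinP.
  - apply: emeasurable_funM => //.
    by apply/measurable_EFinP; exact: measurable_powR_gap_subr.
  - by move=> r; rewrite /= in_itv /= => /fK /andP[_ fle]; rewrite -EFinM lee_fin.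
rewrite ge0_integralZl_EFin //.
- by rewrite EFinM lee_wpmul2l ?lee_fin // integral_powR_gap_subr_oo_le.
- move=> r; rewrite /= in_itv /= => /andP[_ rs]; rewrite lee_fin.
  by rewrite powR_gap_ge0 // subr_gt0 (lt_le_trans rs).
- by apply/measurable_EFinP; exact: measurable_powR_gap_subr.
Qed.

End powR_gap_integral.

Section weighted_powR_gap.
Context {R : realType}.
Local Notation mu := (@lebesgue_measure R).

Lemma integral_weighted_powR_gap_le0 {b g a tau eta : R} : b <= 0 -> g <= 0 ->
  -1 < b + g -> 0 < eta -> eta <= a -> a < tau ->
  (\int[mu]_(r in `[0%R, eta]) ((eta - r) `^ b * ((a - r) `^ g - (tau - r) `^ g))%:E
    <= ((tau - a) `^ (b + g + 1) / (b + g + 1))%:E)%E.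
Proof.
move=> b0 g0 bg1 eta0 etaa ta; have d0 : 0 <= tau - a by rewrite subr_ge0 ltW.
have gapE r : (a - r) `^ g - (tau - r) `^ g = powR_gap g (tau - a) (a - r).
  by rewrite /powR_gap; congr (_ - _ `^ _); ring.
under eq_integral do rewrite gapE.
rewrite -[X in (_ <= X%:E)%E]mul1r.
apply: integral_le_powR_gap => //; first by rewrite bg1 -(addr0 0) lerD.
  by apply: measurable_funM; [exact: measurable_powR_subr | exact: measurable_powR_gap_subr].
move=> r /andP[r0 reta]; have er0 : 0 < eta - r by rewrite subr_gt0.
have ar0 : 0 < a - r by rewrite subr_gt0 (lt_le_trans reta).
rewrite mul1r mulr_ge0 ?powR_ge0 ?powR_gap_ge0 //=.
by apply: powR_gap_mulr_le; rewrite ?lerD2r.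
Qed.

Lemma integral_weighted_powR_gap_ge0 {b g T a tau eta : R} : 0 <= b -> -1 < g <= 0 ->
  0 < eta -> eta <= a -> a <= T -> a < tau ->
  (\int[mu]_(r in `[0%R, eta]) ((eta - r) `^ b * ((a - r) `^ g - (tau - r) `^ g))%:E
    <= (T `^ b * ((tau - a) `^ (g + 1) / (g + 1)))%:E)%E.
Proof.
move=> b0 g01 eta0 etaa aT ta; have /andP[_ g0] := g01.
have d0 : 0 <= tau - a by rewrite subr_ge0 ltW.
have gapE r : (a - r) `^ g - (tau - r) `^ g = powR_gap g (tau - a) (a - r).
  by rewrite /powR_gap; congr (_ - _ `^ _); ring.
under eq_integral do rewrite gapE.
apply: (integral_le_powR_gap _ _ _ _ a) => //; rewrite ?powR_ge0 //.
  by apply: measurable_funM; [exact: measurable_powR_subr | exact: measurable_powR_gap_subr].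
move=> r /andP[r0 reta]; have ar0 : 0 < a - r by rewrite subr_gt0 (lt_le_trans reta).
rewrite mulr_ge0 ?powR_ge0 ?powR_gap_ge0 //= ler_wpM2r ?powR_gap_ge0 //.
by apply: ge0_ler_powR; rewrite ?nnegrE //; lra.
Qed.

End weighted_powR_gap.

Section grid.
Context {R : realType}.
Implicit Types T : R.

Lemma grid_tS T N n : grid_t T N n.+1 = grid_t T N n + T / N%:R.
Proof. by rewrite /grid_t -natr1 mulrDl mul1r. Qed.

Lemma grid_t_le T N n : 0 <= T -> (0 < N)%N -> (n <= N)%N -> grid_t T N n <= T.
Proof.
move=> T0 N0 nN; rewrite /grid_t mulrCA ler_piMr //.
by rewrite ler_pdivrMr ?ltr0n // mul1r ler_nat.
Qed.

Lemma powR_grid_step_le T N j tau q : 0 <= T -> 0 <= q -> (0 < j)%N ->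
  grid_t T N j.-1 < tau -> tau <= grid_t T N j ->
  (tau - grid_t T N j.-1) `^ q <= (T / N%:R) `^ q.
Proof.
move=> T0 q0 j0 ta th; apply: ge0_ler_powR; rewrite ?nnegrE //.
- by rewrite subr_ge0 (ltW ta).
- by rewrite divr_ge0.
- by rewrite lerBlDl -grid_tS prednK.
Qed.

End grid.

Theorem lemma3p5 (R : realType) (T beta gamma : R) (hT : 0 < T)
  (hbg : (beta < 0 /\ gamma < 0 /\ -1 < beta + gamma /\ beta + gamma < 0) \/
         (0 <= beta /\ -1 < gamma /\ gamma < 0)) :
  exists C : R, forall (N : nat), (2 <= N)%N ->
    forall (j : nat), (1 < j)%N -> (j <= N)%N ->
    forall tau eta : R,
      grid_t T N j.-1 < tau -> tau <= grid_t T N j ->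
      0 < eta -> eta <= grid_t T N j.-1 ->
      (\int[@lebesgue_measure R]_(r in `[0%R, eta]%classic)
         ((eta - r) `^ beta *
          ((grid_t T N j.-1 - r) `^ gamma - (tau - r) `^ gamma))%:E
       <= (C * (T / N%:R) `^ (Num.min (beta + gamma + 1) (gamma + 1)))%:E)%E.
Proof.
case: hbg => [[b0 [g0 [bg1 _]]] | [b0 [g1 g0]]].
- exists (1 / (beta + gamma + 1)) => N _ j j1 jN tau eta ta th eta0 etaa.
  have q0 : 0 < beta + gamma + 1 by lra.
  rewrite min_l; last by lra.
  apply: le_trans (integral_weighted_powR_gap_le0 (ltW b0) (ltW g0) bg1 eta0 etaa ta) _.
  rewrite lee_fin mulrC div1r ler_wpM2l ?invr_ge0 ?(ltW q0) //.
  by rewrite powR_grid_step_le ?(ltW hT) ?(ltW q0) ?(ltnW j1).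
- exists (T `^ beta / (gamma + 1)) => N N2 j j1 jN tau eta ta th eta0 etaa.
  have q0 : 0 < gamma + 1 by lra.
  have g01 : -1 < gamma <= 0 by rewrite g1 ltW.
  have aT : grid_t T N j.-1 <= T.
    by apply: grid_t_le; [exact: ltW | exact: leq_trans N2 | exact: leq_trans (leq_pred j) jN].
  rewrite min_r; last by lra.
  apply: le_trans (integral_weighted_powR_gap_ge0 b0 g01 eta0 etaa aT ta) _.
  rewrite lee_fin -mulrA ler_wpM2l ?powR_ge0 // mulrC ler_wpM2l ?invr_ge0 ?(ltW q0) //.
  by rewrite powR_grid_step_le ?(ltW hT) ?(ltW q0) ?(ltnW j1).
Qed.
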